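(* For all positive integers $n,k$, $$S^+(n+k) \geq S^+(n+1)\,S^+(k).$$
   Context: A set $A \subseteq \mathbb{N}$ is sum-free if for all $(a,b)\in A^2$ (allowing $a=b$), $a+b \notin A$. For positive integers $p,n$, an S-template with $n$ colors and width $p$ is a partition of $\{1,\dots,p\}$ into $n$ sum-free subsets $A_1,\dots,A_n$ such that for every $i \in \{1,\dots,n-1\}$ (i.e. every subset except $A_n$) and all $(x,y)\in A_i^2$: if $x+y>p$ then $x+y-p \notin A_i$. $S^+(n)$ denotes the greatest width of an S-template with $n$ colors. *)

From mathcomp Require Import all_boot.
Set Implicit Arguments. Unset Strict Implicit. Unset Printing Implicit Defensive.

(* An S-template with n colors and width p, encoded as a coloring
   c : nat -> nat of {1,...,p}; the part A_i is {x in [1,p] | c x = i},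
   colors range over 1..n, and A_n (color n) is the exceptional part. *)
Definition S_template (n p : nat) (c : nat -> nat) : Prop :=
  [/\ (forall x, 1 <= x <= p -> 1 <= c x <= n),
      (forall x y, 1 <= x <= p -> 1 <= y <= p -> x + y <= p ->
         c x = c y -> c (x + y) <> c x)
    &
      (forall x y, 1 <= x <= p -> 1 <= y <= p -> c x = c y -> c x < n ->
         p < x + y -> c (x + y - p) <> c x)].

Definition has_S_template (n p : nat) : Prop :=
  0 < p /\ exists c, S_template n p c.

Definition is_Splus (n m : nat) : Prop :=
  has_S_template n m /\ (forall p, has_S_template n p -> p <= m).

From mathcomp Require Import all_boot zify.

Set Implicit Arguments. Unset Strict Implicit. Unset Printing Implicit Defensive.

(* Write x in [1, a b] as a (j - 1) + r with residue r in [1, a] and block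
   j in [1, b].  Given an (n+1)-colour template f of width a and a k-colour
   template g of width b, colour x by f r, except when r lies in the
   exceptional class of f, where x gets colour n + g j.  The classes of the
   first kind stay sum-free because the non-exceptional classes of f are
   sum-free modulo a.  For two residues in the exceptional class, either
   their sum stays below a and leaves that class (it is sum-free), or it
   carries and the blocks add exactly: g then sees the sum of the blocks,
   and reduction modulo a b becomes reduction of blocks modulo b. *)

Definition resid (a x : nat) : nat := (x.-1 %% a).+1.
Definition block (a x : nat) : nat := (x.-1 %/ a).+1.

Lemma resid_blockE a x : 0 < a -> 0 < x -> x = a * (block a x).-1 + resid a x.
Proof.
by rewrite /resid /block /= => a_gt0 x_gt0; have := divn_eq x.-1 a; lia.
Qed.

Lemma resid_bounds a x : 0 < a -> 1 <= resid a x <= a.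
Proof. by move=> a_gt0; rewrite /resid ltn_pmod. Qed.

Lemma resid_blockP a x j r :
  0 < r <= a -> x = a * j + r -> resid a x = r /\ block a x = j.+1.
Proof.
move=> r_bounds ->; rewrite /resid /block.
have -> : (a * j + r).-1 = j * a + r.-1 by lia.
by rewrite modnMDl divnMDl ?modn_small ?divn_small; lia.
Qed.

Lemma leq_block a x : 0 < a -> 0 < x -> x <= a * block a x.
Proof.
move=> a_gt0 x_gt0.
have := resid_blockE a_gt0 x_gt0; have := resid_bounds x a_gt0.
by rewrite /block /=; lia.
Qed.

Lemma block_bounds a b x : 0 < a -> 0 < x <= a * b -> 1 <= block a x <= b.
Proof.
move=> a_gt0 /andP[x_gt0 x_le]; rewrite /block ltn0Sn /= ltn_divLR //.
by rewrite mulnC; lia.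
Qed.

Lemma resid_addn a x y : 0 < a -> 0 < x -> 0 < y ->
  resid a x + resid a y <= a -> resid a (x + y) = resid a x + resid a y.
Proof.
move=> a_gt0 x_gt0 y_gt0 no_carry.
have := resid_blockE a_gt0 x_gt0; have := resid_blockE a_gt0 y_gt0.
have := resid_bounds x a_gt0; have := resid_bounds y a_gt0.
move=> ry rx Ey Ex.
have [-> _] := @resid_blockP a (x + y) ((block a x).-1 + (block a y).-1)
  (resid a x + resid a y) ltac:(lia) ltac:(rewrite {1}Ex {1}Ey; nia).
by [].
Qed.

Lemma resid_block_addn_carry a x y : 0 < a -> 0 < x -> 0 < y ->
  a < resid a x + resid a y ->
  resid a (x + y) = resid a x + resid a y - a /\
  block a (x + y) = block a x + block a y.
Proof.
move=> a_gt0 x_gt0 y_gt0 carry.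
have := resid_blockE a_gt0 x_gt0; have := resid_blockE a_gt0 y_gt0.
have := resid_bounds x a_gt0; have := resid_bounds y a_gt0.
have bx : 0 < block a x by []; have by' : 0 < block a y by [].
move=> ry rx Ey Ex.
have [-> ->] := @resid_blockP a (x + y) (block a x + block a y).-1
  (resid a x + resid a y - a) ltac:(lia) ltac:(rewrite {1}Ex {1}Ey; nia).
by split; lia.
Qed.

Lemma resid_block_subn a m z : 0 < a -> a * m < z ->
  resid a (z - a * m) = resid a z /\ block a (z - a * m) = block a z - m.
Proof.
move=> a_gt0 z_gt; have z_gt0 : 0 < z by lia.
have Ez := resid_blockE a_gt0 z_gt0; have rz := resid_bounds z a_gt0.
have m_lt : m < block a z.
  by rewrite -(ltn_pmul2l a_gt0); have := leq_block a_gt0 z_gt0; lia.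
have [-> ->] := @resid_blockP a (z - a * m) ((block a z).-1 - m) (resid a z) rz
  ltac:(rewrite {1}Ez mulnBr; nia).
by split; lia.
Qed.

Section ProductTemplate.

Variables (n k a b : nat) (f g : nat -> nat).
Hypotheses (a_gt0 : 0 < a).
Hypotheses (tf : S_template (n + 1) a f) (tg : S_template k b g).

Definition prod_color (x : nat) : nat :=
  if f (resid a x) <= n then f (resid a x) else n + g (block a x).

Let f_bounds x : 1 <= f (resid a x) <= n + 1.
Proof. by case: tf => f_range _ _; apply/f_range/resid_bounds. Qed.

Let g_bounds x : 0 < x <= a * b -> 1 <= g (block a x) <= k.
Proof. by case: tg => g_range _ _ x_range; apply/g_range/block_bounds. Qed.

Lemma prod_color_bounds x : 0 < x <= a * b -> 1 <= prod_color x <= n + k.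
Proof.
move=> x_range; have := f_bounds x; have := g_bounds x_range.
by rewrite /prod_color; case: ifP; lia.
Qed.

Lemma prod_color_eq_cases x y : 0 < x <= a * b -> 0 < y <= a * b ->
  prod_color x = prod_color y ->
  [/\ f (resid a x) <= n, f (resid a y) = f (resid a x)
    & prod_color x = f (resid a x)] \/
  [/\ f (resid a x) = n + 1, f (resid a y) = n + 1,
      g (block a y) = g (block a x) & prod_color x = n + g (block a x)].
Proof.
move=> x_range y_range; have := f_bounds x; have := f_bounds y.
have := g_bounds x_range; have := g_bounds y_range.
rewrite /prod_color; case: ifP => fx_low; case: ifP => fy_low *.
- by left; split; lia.
- by lia.
- by lia.
- by right; split; lia.
Qed.

Lemma prod_color_neq_low z i : 0 < z <= a * b -> i <= n ->
  f (resid a z) <> i -> prod_color z <> i.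
Proof. by move=> /g_bounds; rewrite /prod_color; case: ifP; lia. Qed.

Lemma resid_addn_color x y : 0 < x -> 0 < y ->
  f (resid a y) = f (resid a x) -> f (resid a x) <= n ->
  f (resid a (x + y)) <> f (resid a x).
Proof.
case: tf => _ f_sumfree f_modfree x_gt0 y_gt0 fxy fx_low.
have rx := resid_bounds x a_gt0; have ry := resid_bounds y a_gt0.
case: (leqP (resid a x + resid a y) a) => [no_carry | carry].
- by rewrite resid_addn //; apply: f_sumfree.
- have [-> _] := resid_block_addn_carry a_gt0 x_gt0 y_gt0 carry.
  by apply: f_modfree => //; lia.
Qed.

Lemma exceptional_addn_no_carry x y : 0 < x -> 0 < y ->
  f (resid a x) = n + 1 -> f (resid a y) = n + 1 ->
  resid a x + resid a y <= a -> f (resid a (x + y)) <= n.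
Proof.
case: tf => _ f_sumfree _ x_gt0 y_gt0 fx fy no_carry.
have rx := resid_bounds x a_gt0; have ry := resid_bounds y a_gt0.
have := f_bounds (x + y); rewrite resid_addn //.
by have := f_sumfree _ _ rx ry no_carry; lia.
Qed.

Lemma prod_color_sumfree x y : 0 < x <= a * b -> 0 < y <= a * b ->
  x + y <= a * b -> prod_color x = prod_color y ->
  prod_color (x + y) <> prod_color x.
Proof.
move=> x_range y_range xy_le /(prod_color_eq_cases x_range y_range).
have xy_range : 0 < x + y <= a * b by lia.
have [x_gt0 y_gt0] : 0 < x /\ 0 < y by lia.
case=> [[fx_low fy ->] | [fx fy gy ->]].
  by apply: prod_color_neq_low; last exact: resid_addn_color.
case: (leqP (resid a x + resid a y) a) => [no_carry | carry].
  have := exceptional_addn_no_carry x_gt0 y_gt0 fx fy no_carry.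
  by move=> fxy_low; rewrite /prod_color ifT //; have := g_bounds x_range; lia.
have [rxy bxy] := resid_block_addn_carry a_gt0 x_gt0 y_gt0 carry.
rewrite /prod_color; case: ifP => [fz_low | _].
  by have := g_bounds x_range; lia.
case: tg => _ g_sumfree _; rewrite bxy.
have [bx by'] := (block_bounds a_gt0 x_range, block_bounds a_gt0 y_range).
have := block_bounds a_gt0 xy_range; rewrite bxy.
by have := @g_sumfree (block a x) (block a y) bx by'; lia.
Qed.

Lemma prod_color_modfree x y : 0 < x <= a * b -> 0 < y <= a * b ->
  prod_color x = prod_color y -> prod_color x < n + k -> a * b < x + y ->
  prod_color (x + y - a * b) <> prod_color x.
Proof.
move=> x_range y_range color_eq + xy_gt.
have z_range : 0 < x + y - a * b <= a * b by lia.
have [x_gt0 y_gt0] : 0 < x /\ 0 < y by lia.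
have [rz bz] := resid_block_subn a_gt0 xy_gt.
case: (prod_color_eq_cases x_range y_range color_eq)
  => [[fx_low fy ->] _ | [fx fy gy ->] gx_lt].
  by apply: prod_color_neq_low; rewrite // rz; exact: resid_addn_color.
case: (leqP (resid a x + resid a y) a) => [no_carry | carry].
  have := exceptional_addn_no_carry x_gt0 y_gt0 fx fy no_carry; rewrite -rz.
  by move=> fz_low; rewrite /prod_color ifT //; have := g_bounds x_range; lia.
have [rxy bxy] := resid_block_addn_carry a_gt0 x_gt0 y_gt0 carry.
rewrite /prod_color; case: ifP => [fz_low | _].
  by have := g_bounds x_range; lia.
case: tg => _ _ g_modfree; rewrite bz bxy.
have [bx by'] := (block_bounds a_gt0 x_range, block_bounds a_gt0 y_range).
have b_lt : b < block a x + block a y.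
  rewrite -bxy -(ltn_pmul2l a_gt0).
  by have := @leq_block a (x + y) a_gt0 ltac:(lia); lia.
by have := @g_modfree (block a x) (block a y) bx by'; lia.
Qed.

Lemma prod_S_template : S_template (n + k) (a * b) prod_color.
Proof.
split; first exact: prod_color_bounds.
- by move=> x y x_range y_range; apply: prod_color_sumfree.
- by move=> x y x_range y_range; apply: prod_color_modfree.
Qed.

End ProductTemplate.

Theorem corollary2p7 (n k a b c : nat) :
  0 < n -> 0 < k ->
  is_Splus (n + 1) a -> is_Splus k b -> is_Splus (n + k) c ->
  a * b <= c.
Proof.
move=> _ _ [[a_gt0 [f tf]] _] [[b_gt0 [g tg]] _] [_ c_max].
apply: c_max; split; first by rewrite muln_gt0 a_gt0 b_gt0.
by exists (prod_color n a f g); apply: prod_S_template.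
Qed.
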